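(* Let $f\colon\mathbb{R}^n\to\mathbb{R}$ be differentiable, $\mu$-strongly convex, with $\|\nabla f(x)-\nabla f(y)\|\le L\|x-y\|$ for all $x,y$ (Euclidean norm), where $0<\mu<L$, and let $x_\star$ be its minimizer, $f_\star=f(x_\star)$. Let $\kappa=L/\mu$ and $\gamma=\frac{\sqrt{8\kappa+1}+3}{2\kappa-2}$. Given $x_0$, let $y_0=x_0$ and for $k=0,1,\dots$ \[ y_{k+1}=x_k-\tfrac1L\nabla f(x_k),\qquad x_{k+1}=y_{k+1}+\frac{1}{2\gamma+1}(y_{k+1}-y_k)+\frac{1}{2\gamma+1}(y_{k+1}-x_k). \] Then for $k=1,2,\dots$, \[ f(y_k)-f_\star\le(1+\gamma)^{-k+1}\,\frac{\mu+2L}{2}\,\|x_0-x_\star\|^2, \] and this bound is $\mathcal{O}\big(\exp(-\sqrt2\,k/\sqrt\kappa)\big)$.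
   Context: A function $f$ is $\mu$-strongly convex if $f(x)-\frac{\mu}{2}\|x\|^2$ is convex. The iteration is called SC-OGM. *)

From HB Require Import structures.
From mathcomp Require Import all_boot all_order all_algebra.
From mathcomp Require Import all_classical all_reals all_analysis.
Set Implicit Arguments. Unset Strict Implicit. Unset Printing Implicit Defensive.
Import Order.TTheory GRing.Theory Num.Theory.
Import numFieldNormedType.Exports.
Local Open Scope ring_scope.

Section SCOGM.
Variables (R : realType) (n : nat).

Definition vec := 'rV[R]_n.

Definition dotp (u v : vec) : R := \sum_(i < n) u ord0 i * v ord0 i.
Definition enorm (u : vec) : R := Num.sqrt (dotp u u).

Definition ebasis (i : 'I_n) : vec := \row_(j < n) (if j == i then 1 else 0).

Definition grad (f : vec -> R) (x : vec) : vec :=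
  \row_(i < n) ('D_(ebasis i) f x).

Definition convex_fun (g : vec -> R) : Prop :=
  forall (x y : vec) (t : R), 0 <= t -> t <= 1 ->
    g (t *: x + (1 - t) *: y) <= t * g x + (1 - t) * g y.

Definition strongly_convex (mu : R) (f : vec -> R) : Prop :=
  convex_fun (fun x => f x - mu / 2 * enorm x ^+ 2).

Fixpoint scogm (g : vec -> vec) (L gam : R) (x0 : vec) (k : nat) : vec * vec :=
  match k with
  | O => (x0, x0)
  | S k' =>
      let (x, y) := scogm g L gam x0 k' in
      let y' := x - L^-1 *: g x in
      (y' + (2 * gam + 1)^-1 *: (y' - y) + (2 * gam + 1)^-1 *: (y' - x), y')
  end.

End SCOGM.

From HB Require Import structures.
From mathcomp Require Import all_boot all_order all_algebra.
From mathcomp Require Import all_classical all_reals all_analysis.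
From mathcomp Require Import ring lra.
Set Implicit Arguments.
Unset Strict Implicit.
Unset Printing Implicit Defensive.
Import Order.TTheory GRing.Theory Num.Theory.
Import numFieldNormedType.Exports.
Local Open Scope ring_scope.

(* The potential
     U_k = f(x_k) - f_* - |grad f(x_k)|^2 / (2L) + mu/2 |z_{k+1} - x_*|^2,
   where z_k = ((2 gam + 1) x_k - (gam + 1) y_k) / gam, contracts by the factor
   1 + gam at every step: U_k - (1 + gam) U_{k+1} is a nonnegative combination
   of two interpolation inequalities for mu-strongly convex L-smooth functions
   and of squared norms, provided mu = L gam^2 / ((gam + 1) (gam + 2)), which is
   exactly the choice of gam.  Moreover f(y_{k+1}) - f_* <= U_k and
   U_0 <= (mu + 2L)/2 |x_0 - x_*|^2.  The exponential form of the rate follows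
   from exp(sqrt 2 / sqrt kappa) <= 1 + gam, a consequence of the Pade bound
   (2 - s) exp s <= 2 + s. *)

Section InnerProduct.
Context {R : realType} {n : nat}.
Implicit Types (u v w : vec R n) (a : R).

Lemma dotpC u v : dotp u v = dotp v u.
Proof. by apply: eq_bigr => i _; rewrite mulrC. Qed.

Lemma dotpDl u v w : dotp (u + v) w = dotp u w + dotp v w.
Proof. by rewrite /dotp -big_split; apply: eq_bigr => i _; rewrite !mxE mulrDl. Qed.

Lemma dotpDr u v w : dotp w (u + v) = dotp w u + dotp w v.
Proof. by rewrite dotpC dotpDl !(dotpC w). Qed.

Lemma dotpZl a u v : dotp (a *: u) v = a * dotp u v.
Proof. by rewrite /dotp mulr_sumr; apply: eq_bigr => i _; rewrite !mxE mulrA. Qed.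

Lemma dotpZr a u v : dotp u (a *: v) = a * dotp u v.
Proof. by rewrite dotpC dotpZl dotpC. Qed.

Lemma dotpNl u v : dotp (- u) v = - dotp u v.
Proof. by rewrite -scaleN1r dotpZl mulN1r. Qed.

Lemma dotpNr u v : dotp u (- v) = - dotp u v.
Proof. by rewrite dotpC dotpNl dotpC. Qed.

Lemma dotp0l v : dotp 0 v = 0.
Proof. by rewrite -(scale0r (0 : vec R n)) dotpZl mul0r. Qed.

Lemma dotp0r v : dotp v 0 = 0.
Proof. by rewrite dotpC dotp0l. Qed.

Lemma dotp_ge0 u : 0 <= dotp u u.
Proof. by apply: sumr_ge0 => i _; rewrite -expr2 sqr_ge0. Qed.

Lemma dotp_eq0 u : dotp u u = 0 -> u = 0.
Proof.
move=> /eqP; rewrite /dotp psumr_eq0 => [/allP u0|i _]; last by rewrite -expr2 sqr_ge0.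
apply/matrixP => i0 i; rewrite mxE (ord1 i0) {i0}.
by apply/eqP; rewrite -sqrf_eq0 expr2; apply: u0; rewrite mem_index_enum.
Qed.

Lemma enorm_sq u : enorm u ^+ 2 = dotp u u.
Proof. by rewrite sqr_sqrtr // dotp_ge0. Qed.

Lemma dotp_le_of_enorm_le a u v :
  enorm u <= a * enorm v -> dotp u u <= a ^+ 2 * dotp v v.
Proof.
move=> le_uv; rewrite -!enorm_sq -exprMn !expr2.
by apply: ler_pM => //; apply: sqrtr_ge0.
Qed.

Lemma dotp_le_of_sqr_le a u v :
  0 < a -> dotp u u <= a ^+ 2 * dotp v v -> dotp u v <= a * dotp v v.
Proof.
move=> a_gt0 le_uv.
have := dotp_ge0 (u - a *: v).
rewrite dotpDl !dotpDr !dotpNl !dotpNr !dotpZl !dotpZr (dotpC v u).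
nra.
Qed.

End InnerProduct.

Ltac dotp_expand :=
  rewrite ?(dotpDl, dotpDr, dotpZl, dotpZr, dotpNl, dotpNr, dotp0l, dotp0r).

Section Interpolation.
Context {R : realType} {n : nat}.

(* The interpolation condition of Taylor, Hendrickx and Glineur: a table
   (x_i, g_i, F_i) is interpolated by a mu-strongly convex L-smooth function
   iff [interp_gap mu L F_i F_j x_i x_j g_i g_j >= 0] for all i, j. *)
Definition interp_gap (mu L Fi Fj : R) (xi xj gi gj : vec R n) : R :=
  Fi - Fj - dotp gj (xi - xj) - mu / 2 * dotp (xi - xj) (xi - xj)
  - dotp (gi - gj - mu *: (xi - xj)) (gi - gj - mu *: (xi - xj)) / (2 * (L - mu)).

Lemma interp_gap_shift (mu L Fi Fj c : R) (xi xj s gi gj : vec R n) :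
  interp_gap mu L (Fi - c) (Fj - c) (xi - s) (xj - s) gi gj
  = interp_gap mu L Fi Fj xi xj gi gj.
Proof.
rewrite /interp_gap.
have -> : xi - s - (xj - s) = xi - xj by rewrite opprB addrA subrK.
by have -> : Fi - c - (Fj - c) = Fi - Fj by ring.
Qed.

Variables (f : vec R n -> R) (G : vec R n -> vec R n).

Lemma interp_gap_ge0 (mu L : R) xi xj : mu < L ->
  (forall z, f xj + dotp (G xj) (z - xj) + mu / 2 * dotp (z - xj) (z - xj) <= f z) ->
  (forall z, f z <= f xi + dotp (G xi) (z - xi) + L / 2 * dotp (z - xi) (z - xi)) ->
  0 <= interp_gap mu L (f xi) (f xj) xi xj (G xi) (G xj).
Proof.
move=> mu_lt_L f_ge f_le.
(* [w] minimises the upper model at [xi] minus the lower model at [xj];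
   the minimum value is the gap *)
pose w := xi - (L - mu)^-1 *: (G xi - G xj - mu *: (xi - xj)).
have -> : interp_gap mu L (f xi) (f xj) xi xj (G xi) (G xj) =
  (f xi + dotp (G xi) (w - xi) + L / 2 * dotp (w - xi) (w - xi) - f w)
  + (f w - (f xj + dotp (G xj) (w - xj) + mu / 2 * dotp (w - xj) (w - xj))).
  rewrite /interp_gap /w; dotp_expand.
  rewrite ?(dotpC (G xi) xi) ?(dotpC (G xj) xi) ?(dotpC (G xi) xj) ?(dotpC (G xj) xj)
    ?(dotpC xj xi) ?(dotpC (G xj) (G xi)).
  by field; rewrite subr_eq0 gt_eqF.
by rewrite addr_ge0 // subr_ge0.
Qed.

Lemma grad_step_le (L : R) x : 0 < L ->
  (forall z, f z <= f x + dotp (G x) (z - x) + L / 2 * dotp (z - x) (z - x)) ->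
  f (x - L^-1 *: G x) <= f x - dotp (G x) (G x) / (2 * L).
Proof.
move=> L_gt0 /(_ (x - L^-1 *: G x)).
have -> : x - L^-1 *: G x - x = - (L^-1 *: G x) by rewrite addrAC subrr add0r.
dotp_expand; congr (_ <= _).
by field; rewrite gt_eqF.
Qed.

Lemma grad_eq0_of_min (L : R) xs : 0 < L ->
  (forall z, f z <= f xs + dotp (G xs) (z - xs) + L / 2 * dotp (z - xs) (z - xs)) ->
  (forall x, f xs <= f x) -> G xs = 0.
Proof.
move=> L_gt0 f_le xs_min; apply: dotp_eq0.
have := le_trans (xs_min _) (grad_step_le L_gt0 f_le).
rewrite -subr_ge0 addrAC subrr add0r oppr_ge0 pmulr_lle0 ?invr_gt0 ?mulr_gt0 //.
by move=> le0; apply/eqP; rewrite eq_le le0 dotp_ge0.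
Qed.

End Interpolation.

Section PotentialCertificates.
Context {R : realType} {n : nat}.

Let sub_mu {mu L gam : R} : 0 < gam -> mu = L * gam ^+ 2 / ((gam + 1) * (gam + 2)) ->
  L - mu = L * (3 * gam + 2) / ((gam + 1) * (gam + 2)).
Proof. by move=> g0 ->; field; rewrite !gt_eqF //; lra. Qed.

Lemma potential_step (mu L gam F F' : R) (x gx z x' gx' z' : vec R n) :
  0 < L -> 0 < gam -> mu = L * gam ^+ 2 / ((gam + 1) * (gam + 2)) ->
  x' = ((gam + 1) / (2 * gam + 1)) *: (x - L^-1 *: gx) + (gam / (2 * gam + 1)) *: z ->
  z' = (1 + gam)^-1 *: z + (gam / (1 + gam)) *: x' - ((gam + 2) / (gam * L)) *: gx' ->
  0 <= interp_gap mu L F F' x x' gx gx' ->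
  0 <= interp_gap mu L 0 F' 0 x' 0 gx' ->
  (1 + gam) * (F' - dotp gx' gx' / (2 * L) + mu / 2 * dotp z' z')
   <= F - dotp gx gx / (2 * L) + mu / 2 * dotp z z.
Proof.
move=> L0 g0 mu_def x'E z'E Q1 Q2.
have L_mu := sub_mu g0 mu_def.
set g := gam in g0 mu_def L_mu x'E z'E *.
pose den := g ^+ 3 + 2 * g ^+ 2 + 5 * g + 2.
pose d0 := g ^+ 3 * den / (2 * (g + 2) * (2 * g + 1) ^+ 2 * (3 * g + 2)).
pose l01 := (g ^+ 3 - g ^+ 2 - 5 * g - 2) / den.
pose l02 := - (g * (g + 2) * (2 * g + 1)) / den.
pose d1 := g ^+ 5 * (g ^+ 2 + 5 * g + 2) / (2 * (g + 1) * (g + 2) * (3 * g + 2) * den).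
pose l12 := - ((g + 1) * (g + 2) ^+ 2 * (2 * g + 1)) / (g ^+ 2 * (g ^+ 2 + 5 * g + 2)).
pose d2 := g ^+ 2 / (2 * (g ^+ 2 + 5 * g + 2)).
pose s0 := x - L^-1 *: gx + l01 *: z + (l02 / L) *: gx'.
pose s1 := z + (l12 / L) *: gx'.
have [g2 g3 g5] : [/\ 0 < g ^+ 2, 0 < g ^+ 3 & 0 < g ^+ 5] by rewrite !exprn_gt0.
have den_gt0 : 0 < den by rewrite /den; lra.
have sos : F - dotp gx gx / (2 * L) + mu / 2 * dotp z z
   - (1 + g) * (F' - dotp gx' gx' / (2 * L) + mu / 2 * dotp z' z')
   = interp_gap mu L F F' x x' gx gx' + g * interp_gap mu L 0 F' 0 x' 0 gx'
     + L * d0 * dotp s0 s0 + L * d1 * dotp s1 s1 + d2 / L * dotp gx' gx'.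
  rewrite /interp_gap L_mu /s0 /s1 z'E x'E mu_def; dotp_expand.
  rewrite ?(dotpC gx x) ?(dotpC z x) ?(dotpC gx' x) ?(dotpC z gx) ?(dotpC gx' gx) ?(dotpC gx' z).
  rewrite /d0 /d1 /d2 /l01 /l02 /l12 /den.
  by field; rewrite !gt_eqF //; lra.
rewrite -subr_ge0 sos.
have d0_ge0 : 0 <= d0 by rewrite /d0; apply: divr_ge0; rewrite ?mulr_ge0 // ?exprn_ge0; lra.
have d1_ge0 : 0 <= d1 by rewrite /d1; apply: divr_ge0; rewrite ?mulr_ge0 //; lra.
have d2_ge0 : 0 <= d2 by rewrite /d2; apply: divr_ge0; lra.
clearbody d0 d1 d2.
apply: (addr_ge0 (addr_ge0 (addr_ge0 (addr_ge0 Q1 _) _) _) _);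
  by rewrite ?mulr_ge0 ?invr_ge0 ?dotp_ge0 //; lra.
Qed.

Lemma potential_init (mu L gam F : R) (x gx z : vec R n) :
  0 < L -> 0 < gam -> mu = L * gam ^+ 2 / ((gam + 1) * (gam + 2)) ->
  z = x - ((gam + 2) / (gam * L)) *: gx ->
  0 <= interp_gap mu L 0 F 0 x 0 gx ->
  dotp gx gx <= L ^+ 2 * dotp x x ->
  F - dotp gx gx / (2 * L) + mu / 2 * dotp z z <= (mu + 2 * L) / 2 * dotp x x.
Proof.
move=> L0 g0 mu_def zE Q lip.
have L_mu := sub_mu g0 mu_def.
set g := gam in g0 mu_def L_mu zE *.
pose P4 := g ^+ 4 + 5 * g ^+ 3 + 6 * g ^+ 2 + 5 * g + 2.
pose lam := 1 / (2 * (1 + g) ^+ 2).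
pose de := P4 / (2 * (g + 1) ^+ 2 * (3 * g + 2)).
pose rho := - ((g + 1) * (g ^+ 3 + g ^+ 2 + 3 * g + 2)) / P4.
pose rest := g * (3 * g ^+ 5 + 15 * g ^+ 4 + 31 * g ^+ 3 + 33 * g ^+ 2 + 21 * g + 6)
   / (2 * (g + 1) ^+ 2 * P4).
pose u := gx + (L * rho) *: x.
have [g2 g3 g4 g5] : [/\ 0 < g ^+ 2, 0 < g ^+ 3, 0 < g ^+ 4 & 0 < g ^+ 5].
  by rewrite !exprn_gt0.
have P4_gt0 : 0 < P4 by rewrite /P4; lra.
have sos : (mu + 2 * L) / 2 * dotp x x - (F - dotp gx gx / (2 * L) + mu / 2 * dotp z z)
  = interp_gap mu L 0 F 0 x 0 gx + lam / L * (L ^+ 2 * dotp x x - dotp gx gx)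
    + de / L * dotp u u + L * rest * dotp x x.
  rewrite /interp_gap L_mu /u zE mu_def; dotp_expand.
  rewrite ?(dotpC gx x) /lam /de /rho /rest /P4.
  by field; rewrite !gt_eqF //; lra.
have lam_ge0 : 0 <= lam by rewrite /lam divr_ge0 // mulr_ge0 ?exprn_ge0; lra.
have de_ge0 : 0 <= de by rewrite /de divr_ge0 ?mulr_ge0 ?exprn_ge0; lra.
have rest_ge0 : 0 <= rest.
  by rewrite /rest divr_ge0 ?mulr_ge0 ?exprn_ge0 //; lra.
rewrite -subr_ge0 sos; clearbody lam de rest.
apply: (addr_ge0 (addr_ge0 (addr_ge0 Q _) _) _);
  by rewrite ?mulr_ge0 ?invr_ge0 ?dotp_ge0 ?subr_ge0 //; lra.
Qed.

End PotentialCertificates.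

Section Smoothness.
Context {R : realType} {n : nat}.
Local Open Scope classical_set_scope.
Implicit Types (f : vec R n -> R) (x y z v : vec R n).

Lemma ebasisE (i : 'I_n) : @ebasis R n i = 'e_i.
Proof. by apply/rowP => j; rewrite !mxE eqxx; case: (j == i). Qed.

Lemma derive_grad f x v : differentiable f x -> 'D_v f x = dotp (grad f x) v.
Proof.
move=> df; rewrite deriveE // {1}(row_sum_delta v) linear_sum.
apply: eq_bigr => i _; rewrite linearZ /= !mxE mulrC -deriveE //.
by rewrite ebasisE.
Qed.

Lemma is_derive_along_line f x v t : differentiable f (t *: v + x) ->
  is_derive t 1 (fun s => f (s *: v + x)) ('D_v f (t *: v + x)).
Proof.
move=> df.
have slopeE : (fun h : R => h^-1 *: (((fun s => f (s *: v + x)) \o shift t) (h *: 1)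
                  - f (t *: v + x)))
            = (fun h : R => h^-1 *: ((f \o shift (t *: v + x)) (h *: v) - f (t *: v + x))).
  by apply: funext => h /=; rewrite [_%:A]mulr1 scalerDl addrA.
apply: DeriveDef; first by rewrite /derivable slopeE; exact: diff_derivable.
by rewrite /derive slopeE.
Qed.

Lemma derive_le_of_slope_le f x v (K D : R) :
  derivable f x v -> 0 <= D ->
  (forall t, 0 < t < 1 -> t^-1 * (f (t *: v + x) - f x) <= K + D * t) ->
  'D_v f x <= K.
Proof.
move=> df D_ge0 slope_le.
have slope_right : (fun h : R => h^-1 *: ((f \o shift x) (h *: v) - f x)) @ 0^'+
                   --> 'D_v f x.
  apply: cvg_trans df; apply: cvg_app => A [e e_gt0 Ae].
  by exists e => // y ye y_gt0; apply: Ae => //; exact/lt0r_neq0.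
apply/ler_addgt0Pr => e e_gt0.
pose s := e / (D + e + 1).
have s_gt0 : 0 < s by apply: divr_gt0; lra.
have s_lt1 : s < 1 by rewrite ltr_pdivrMr; lra.
have Ds_le : D * s <= e by rewrite /s mulrA ler_pdivrMr; [nra|lra].
apply: (cvgr_to_le slope_right); near=> h.
have h_gt0 : 0 < h by near: h; exists 1 => /=.
have h_lt_s : h < s.
  near: h; exists s => // y /=; rewrite sub0r normrN => ys y_gt0.
  by move: ys; rewrite gtr0_norm.
rewrite /=; apply: le_trans (slope_le h _) _.
  by rewrite h_gt0 (lt_trans h_lt_s s_lt1).
have : D * h <= D * s by apply: ler_wpM2l => //; exact: ltW.
lra.
Unshelve. all: by end_near.
Qed.

Lemma strongly_convex_ge mu f x z : 0 <= mu -> differentiable f x ->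
  strongly_convex mu f ->
  f x + dotp (grad f x) (z - x) + mu / 2 * dotp (z - x) (z - x) <= f z.
Proof.
move=> mu_ge0 df sc; set v := z - x.
rewrite -derive_grad //.
suff : 'D_v f x <= f z - f x - mu / 2 * dotp v v by lra.
apply: (derive_le_of_slope_le (D := mu / 2 * dotp v v)).
- exact: diff_derivable.
- by rewrite mulr_ge0 ?dotp_ge0 //; lra.
- move=> t /andP[t_gt0 t_lt1].
  have := sc z x t (ltW t_gt0) (ltW t_lt1).
  have -> : t *: z + (1 - t) *: x = t *: v + x.
    by apply/rowP => i; rewrite /v !mxE; ring.
  have zE : z = v + x by rewrite /v subrK.
  clearbody v; rewrite {}zE !enorm_sq; dotp_expand.
  rewrite (dotpC x v) ler_pdivrMl //.
  nra.
Qed.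

Lemma lipschitz_grad_dotp_le f L x y : 0 < L ->
  enorm (grad f y - grad f x) <= L * enorm (y - x) ->
  dotp (grad f y - grad f x) (y - x) <= L * dotp (y - x) (y - x).
Proof. by move=> L_gt0 /dotp_le_of_enorm_le; exact: dotp_le_of_sqr_le. Qed.

(* Along the segment, [f] minus its quadratic upper model has nonpositive
   derivative, by the Lipschitz bound; conclude with the mean value theorem. *)
Lemma lipschitz_grad_le f L x z : (forall y, differentiable f y) -> 0 < L ->
  (forall y, enorm (grad f y - grad f x) <= L * enorm (y - x)) ->
  f z <= f x + dotp (grad f x) (z - x) + L / 2 * dotp (z - x) (z - x).
Proof.
move=> df L_gt0 lip; set v := z - x.
pose q := dotp (grad f x) v; pose c := L / 2 * dotp v v.
pose p : {poly R} := q *: 'X + c *: 'X^2.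
pose psi s := f (s *: v + x) - p.[s].
pose dpsi s := 'D_v f (s *: v + x) - (q + c * (2 * s)).
have psi_derive (s : R) : is_derive s (1 : R) psi (dpsi s).
  have := is_deriveB (is_derive_along_line (df (s *: v + x))) (is_derive_poly p s).
  move=> /is_derive_eq; apply; rewrite /dpsi /p !poly.derivE !hornerE /=.
  by congr (_ - _); ring.
have psi_cont : {within `[0, 1], continuous psi}.
  apply: derivable_within_continuous => s _.
  exact: (@ex_derive _ _ _ _ _ _ _ (psi_derive s)).
have [t /[!in_itv] /= /andP[t_gt0 _]] := MVT ltr01 (fun s _ => psi_derive s) psi_cont.
have dpsi_le0 : dpsi t <= 0.
  have := lipschitz_grad_dotp_le L_gt0 (lip (t *: v + x)).
  rewrite /dpsi !derive_grad // addrK dotpZr dotpZl dotpZr dotpDl dotpNl /c /q.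
  nra.
rewrite /psi /p /= !hornerE /= scale1r scale0r add0r /v subrK -/v -/q -/c.
lra.
Qed.

End Smoothness.

Section Iterates.
Context {R : realType} {n : nat}.
Variables (g : vec R n -> vec R n) (L gam : R) (x0 : vec R n).

Local Notation x_ k := (scogm g L gam x0 k).1.
Local Notation y_ k := (scogm g L gam x0 k).2.

(* The auxiliary sequence of the analysis, chosen so that
   x_k = ((gam + 1) y_k + gam z_k) / (2 gam + 1). *)
Definition scogm_z k := gam^-1 *: ((2 * gam + 1) *: x_ k - (gam + 1) *: y_ k).

Lemma scogm_yS k : y_ k.+1 = x_ k - L^-1 *: g (x_ k).
Proof. by rewrite /=; case: scogm. Qed.

Lemma scogm_xS k : x_ k.+1 = y_ k.+1 + (2 * gam + 1)^-1 *: (y_ k.+1 - y_ k)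
                                   + (2 * gam + 1)^-1 *: (y_ k.+1 - x_ k).
Proof. by rewrite /=; case: scogm. Qed.

Hypotheses (L_gt0 : 0 < L) (gam_gt0 : 0 < gam).

Let gam_neq0 : gam != 0. Proof. exact: lt0r_neq0. Qed.
Let gam1_neq0 : 1 + gam != 0. Proof. by rewrite lt0r_neq0 // addr_gt0. Qed.
Let gam2_neq0 : 2 * gam + 1 != 0. Proof. by rewrite lt0r_neq0 // addr_gt0 ?mulr_gt0. Qed.
Let L_neq0 : L != 0. Proof. exact: lt0r_neq0. Qed.

Lemma scogm_xE s k : x_ k.+1 - s =
  ((gam + 1) / (2 * gam + 1)) *: ((x_ k - s) - L^-1 *: g (x_ k))
  + (gam / (2 * gam + 1)) *: (scogm_z k.+1 - s).
Proof.
rewrite /scogm_z scogm_yS; apply/rowP => i; rewrite !mxE.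
by field; rewrite ?L_neq0 ?gam_neq0 ?gam1_neq0 ?gam2_neq0.
Qed.

Lemma scogm_zS s k : scogm_z k.+1 - s =
  (1 + gam)^-1 *: (scogm_z k - s) + (gam / (1 + gam)) *: (x_ k - s)
  - ((gam + 2) / (gam * L)) *: g (x_ k).
Proof.
rewrite /scogm_z scogm_xS scogm_yS; apply/rowP => i; rewrite !mxE.
by field; rewrite ?L_neq0 ?gam_neq0 ?gam1_neq0 ?gam2_neq0.
Qed.

Lemma scogm_z1 s : scogm_z 1 - s = (x0 - s) - ((gam + 2) / (gam * L)) *: g x0.
Proof.
rewrite /scogm_z /=; apply/rowP => i; rewrite !mxE.
by field; rewrite ?L_neq0 ?gam_neq0 ?gam1_neq0 ?gam2_neq0.
Qed.

End Iterates.

Section Convergence.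
Context {R : realType} {n : nat}.
Variables (f : vec R n -> R) (mu L gam : R) (xs x0 : vec R n).
Hypotheses (L_gt0 : 0 < L) (gam_gt0 : 0 < gam)
  (mu_def : mu = L * gam ^+ 2 / ((gam + 1) * (gam + 2))).
Hypothesis f_ge :
  forall x z, f x + dotp (grad f x) (z - x) + mu / 2 * dotp (z - x) (z - x) <= f z.
Hypothesis f_le :
  forall x z, f z <= f x + dotp (grad f x) (z - x) + L / 2 * dotp (z - x) (z - x).
Hypothesis grad_lip : forall x y, enorm (grad f x - grad f y) <= L * enorm (x - y).
Hypothesis xs_min : forall x, f xs <= f x.

Local Notation x_ k := (scogm (grad f) L gam x0 k).1.
Local Notation y_ k := (scogm (grad f) L gam x0 k).2.
Local Notation z_ k := (scogm_z (grad f) L gam x0 k).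

Let mu_ge0 : 0 <= mu.
Proof. by rewrite mu_def divr_ge0 ?mulr_ge0 ?exprn_ge0 ?addr_ge0 ?ltW. Qed.

Let mu_lt_L : mu < L.
Proof.
have L0 := L_gt0; have g0 := gam_gt0.
rewrite mu_def ltr_pdivrMr ?mulr_gt0 ?addr_gt0 //; nra.
Qed.

Let grad_xs : grad f xs = 0.
Proof. exact: grad_eq0_of_min L_gt0 (f_le xs) xs_min. Qed.

Let interp_gap_xs x :
  0 <= interp_gap mu L 0 (f x - f xs) 0 (x - xs) 0 (grad f x).
Proof.
have := interp_gap_ge0 mu_lt_L (f_ge x) (f_le xs).
by rewrite -(interp_gap_shift _ _ _ _ (f xs) _ _ xs) grad_xs !subrr.
Qed.

Definition scogm_potential k :=
  f (x_ k) - f xs - dotp (grad f (x_ k)) (grad f (x_ k)) / (2 * L)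
  + mu / 2 * dotp (z_ k.+1 - xs) (z_ k.+1 - xs).

Lemma scogm_potential_step k : (1 + gam) * scogm_potential k.+1 <= scogm_potential k.
Proof.
apply: potential_step L_gt0 gam_gt0 mu_def _ _ _ (interp_gap_xs _).
- exact: scogm_xE.
- exact: scogm_zS.
- rewrite interp_gap_shift.
  exact: interp_gap_ge0 mu_lt_L (f_ge _) (f_le _).
Qed.

Lemma scogm_potential0_le :
  scogm_potential 0 <= (mu + 2 * L) / 2 * dotp (x0 - xs) (x0 - xs).
Proof.
apply: potential_init L_gt0 gam_gt0 mu_def (scogm_z1 _ _ L_gt0 gam_gt0 _) (interp_gap_xs _) _.
by apply: dotp_le_of_enorm_le; rewrite -[grad f x0]subr0 -grad_xs.
Qed.

Lemma scogm_value_le_potential k : f (y_ k.+1) - f xs <= scogm_potential k.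
Proof.
rewrite scogm_yS /scogm_potential.
have := grad_step_le L_gt0 (f_le (x_ k)).
have : 0 <= mu / 2 * dotp (z_ k.+1 - xs) (z_ k.+1 - xs).
  by rewrite mulr_ge0 ?divr_ge0 ?dotp_ge0.
lra.
Qed.

Lemma scogm_rate k :
  f (y_ k.+1) - f xs <= (1 + gam) ^- k * ((mu + 2 * L) / 2 * enorm (x0 - xs) ^+ 2).
Proof.
have gam1_gt0 : 0 < 1 + gam by rewrite addr_gt0.
have decay : (1 + gam) ^+ k * scogm_potential k <= scogm_potential 0.
  elim: k => [|k IH]; first by rewrite mul1r.
  rewrite exprSr -mulrA; apply: le_trans IH.
  by apply: ler_wpM2l; [rewrite exprn_ge0 ?ltW | exact: scogm_potential_step].
apply: le_trans (scogm_value_le_potential k) _.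
rewrite enorm_sq ler_pdivlMl ?exprn_gt0 //.
exact: le_trans decay scogm_potential0_le.
Qed.

End Convergence.

Section ExponentialRate.
Context {R : realType}.
Local Open Scope classical_set_scope.

Lemma expR_pade_le (s : R) : 0 <= s -> (2 - s) * expR s <= 2 + s.
Proof.
rewrite le0r => /predU1P[->|s_gt0]; first by rewrite expR0; lra.
pose psi : R -> R := (cst 2 - id) * expR - (cst 2 + id).
have psi_derive (u : R) : is_derive u (1 : R) psi ((1 - u) * expR u - 1).
  have d2 : is_derive u (1 : R) (cst (2 : R)) 0 by apply: is_derive_cst.
  have did : is_derive u (1 : R) (@id R) 1 by apply: is_derive_id.
  have := is_deriveB (is_deriveM (is_deriveB d2 did) (is_derive_expR u)) (is_deriveD d2 did).
  move=> /is_derive_eq; apply.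
  change ((2 - u) * expR u + expR u * (0 - 1) - (0 + 1) = (1 - u) * expR u - 1).
  ring.
have psi_cont : {within `[0, s], continuous psi}.
  apply: derivable_within_continuous => u _.
  exact: (@ex_derive _ _ _ _ _ _ _ (psi_derive u)).
have [c _ psiE] := MVT s_gt0 (fun u _ => psi_derive u) psi_cont.
(* since 1 - c <= expR (- c) = (expR c)^-1 *)
have dpsi_le0 : (1 - c) * expR c - 1 <= 0.
  have := expR_ge1Dx (- c); have := expRxMexpNx_1 c; have := expR_gt0 c.
  nra.
move: psiE.
change ((2 - s) * expR s - (2 + s) - ((2 - 0) * expR 0 - (2 + 0))
        = ((1 - c) * expR c - 1) * (s - 0) -> (2 - s) * expR s <= 2 + s).
rewrite expR0 !subr0 addr0 mulr1 subrr subr0 => psiE.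
by rewrite -subr_le0 psiE pmulr_lle0.
Qed.

Definition scogm_gamma (kappa : R) := (Num.sqrt (8 * kappa + 1) + 3) / (2 * kappa - 2).

Lemma scogm_gamma_gt0 kappa : 1 < kappa -> 0 < scogm_gamma kappa.
Proof. by move=> k1; have := sqrtr_ge0 (8 * kappa + 1); rewrite divr_gt0 //; lra. Qed.

(* gam is the positive root of (kappa - 1) gam^2 - 3 gam - 2 *)
Lemma scogm_gamma_sqr kappa : 1 < kappa ->
  let gam := scogm_gamma kappa in (gam + 1) * (gam + 2) = kappa * gam ^+ 2.
Proof.
move=> k1; rewrite /scogm_gamma.
have := @sqr_sqrtr R (8 * kappa + 1) ltac:(lra).
move: (Num.sqrt _) => r r2.
have -> : kappa = (r ^+ 2 - 1) / 8 by rewrite r2; field.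
by field; rewrite r2 gt_eqF //; lra.
Qed.

Lemma expR_le_scogm_gamma kappa : 1 < kappa ->
  expR (Num.sqrt 2 / Num.sqrt kappa) <= 1 + scogm_gamma kappa.
Proof.
move=> k1; rewrite /scogm_gamma.
set r := Num.sqrt (8 * kappa + 1); set t := Num.sqrt kappa; set q := Num.sqrt 2.
have r_ge0 : 0 <= r := sqrtr_ge0 _.
have t_gt0 : 0 < t by rewrite sqrtr_gt0; lra.
have q_gt0 : 0 < q by rewrite sqrtr_gt0.
have r2 : r ^+ 2 = 8 * kappa + 1 by rewrite sqr_sqrtr //; lra.
have t2 : t ^+ 2 = kappa by rewrite sqr_sqrtr //; lra.
have q2 : q ^+ 2 = 2 by rewrite sqr_sqrtr.
clearbody r t q.
set gam := (r + 3) / (2 * kappa - 2).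
have t_gt1 : 1 < t by nra.
have qt_le_r : 2 * q * t <= r.
  rewrite -(ler_pXn2r (_ : 0 < 2)%N) ?nnegrE ?mulr_ge0 //; try lra.
  by rewrite !exprMn q2 t2 r2; lra.
have s_ge0 : 0 <= q / t by rewrite divr_ge0 //; lra.
have s_lt2 : q / t < 2 by rewrite ltr_pdivrMr //; nra.
have gamE : gam * (2 * kappa - 2) = r + 3 by rewrite /gam; field; rewrite gt_eqF //; lra.
have gam_ge : 2 * q <= gam * (2 * t - q).
  rewrite -(ler_pM2r (_ : 0 < 2 * kappa - 2)); last lra.
  have -> : gam * (2 * t - q) * (2 * kappa - 2) = (r + 3) * (2 * t - q) by rewrite -gamE; ring.
  rewrite -t2; nra.
have pade_le : 2 + q / t <= (1 + gam) * (2 - q / t).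
  rewrite -subr_ge0.
  have -> : (1 + gam) * (2 - q / t) - (2 + q / t) = (gam * (2 * t - q) - 2 * q) / t.
    by field; rewrite gt_eqF.
  by rewrite divr_ge0 //; lra.
rewrite -(ler_pM2l (_ : 0 < 2 - q / t)) ?subr_gt0 // [_ * (1 + gam)]mulrC.
exact: le_trans (expR_pade_le s_ge0) pade_le.
Qed.

Lemma invr_expn_le_expR (a s : R) k :
  expR s <= a -> a ^- k <= a * expR (- (s * k.+1%:R)).
Proof.
move=> le_sa; have a_gt0 : 0 < a := lt_le_trans (expR_gt0 s) le_sa.
have -> : a ^- k = a * a ^- k.+1 by rewrite exprS invfM mulrA divff ?mul1r // gt_eqF.
rewrite expRN [s * _]mulrC expRM_natl; apply: ler_wpM2l; first exact: ltW.
rewrite lef_pV2 ?posrE ?exprn_gt0 ?expR_gt0 //.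
by apply: lerXn2r => //; rewrite nnegrE ltW // expR_gt0.
Qed.

End ExponentialRate.

Theorem theorem3 (R : realType) (n : nat) (f : vec R n -> R) (mu L : R)
  (xstar x0 : vec R n) :
  (forall x : vec R n, differentiable f x) ->
  strongly_convex mu f ->
  (forall x y : vec R n,
      enorm (grad f x - grad f y) <= L * enorm (x - y)) ->
  0 < mu -> mu < L ->
  (forall x : vec R n, f xstar <= f x) ->
  let kappa := L / mu in
  let gam := (Num.sqrt (8 * kappa + 1) + 3) / (2 * kappa - 2) in
  let B := fun k : nat =>
    (1 + gam) ^- k.-1 * ((mu + 2 * L) / 2) * enorm (x0 - xstar) ^+ 2 in
  (forall k : nat, (1 <= k)%N ->
     f (scogm (grad f) L gam x0 k).2 - f xstar <= B k)
  /\
  (exists C : R, forall k : nat, (1 <= k)%N ->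
     B k <= C * expR (- (Num.sqrt 2 * k%:R / Num.sqrt kappa))).
Proof.
move=> df sc lip mu_gt0 mu_lt_L xstar_min kappa gam B.
have L_gt0 : 0 < L := lt_trans mu_gt0 mu_lt_L.
have kappa_gt1 : 1 < kappa by rewrite ltr_pdivlMr // mul1r.
have gam_gt0 : 0 < gam := scogm_gamma_gt0 kappa_gt1.
have gam_sqr : (gam + 1) * (gam + 2) = kappa * gam ^+ 2 := scogm_gamma_sqr kappa_gt1.
have mu_def : mu = L * gam ^+ 2 / ((gam + 1) * (gam + 2)).
  by rewrite gam_sqr /kappa; field; rewrite !gt_eqF.
have f_ge x z := strongly_convex_ge z (ltW mu_gt0) (df x) sc.
have f_le x z := lipschitz_grad_le z df L_gt0 (fun y => lip y x).
have rate := scogm_rate x0 L_gt0 gam_gt0 mu_def f_ge f_le lip xstar_min.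
have K_ge0 : 0 <= (mu + 2 * L) / 2 * enorm (x0 - xstar) ^+ 2.
  by rewrite mulr_ge0 ?exprn_ge0 ?sqrtr_ge0 //; lra.
split=> [[|k] // _|]; first by rewrite /B -mulrA; exact: rate.
exists ((1 + gam) * ((mu + 2 * L) / 2 * enorm (x0 - xstar) ^+ 2)) => -[|k] // _.
rewrite /B -mulrA [X in _ <= X]mulrC [X in _ <= X]mulrA; apply: (ler_wpM2r K_ge0).
rewrite [expR _ * _]mulrC [_ * _%:R / _]mulrAC.
exact: invr_expn_le_expR _ (expR_le_scogm_gamma kappa_gt1).
Qed.
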